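(* Let $k\ge4$ be even and let $G=(V,E)$ be a $k$-uniform cored hypergraph with Laplacian tensor $\mathcal L$ and signless Laplacian tensor $\mathcal Q$. For every $e\in E$ let $i_e\in e$ be a cored vertex. Then: (i) If $\mathbf x\in\mathbb R^n_+$ is an H-eigenvector of $\mathcal Q$ corresponding to $\lambda(\mathcal Q)$, then the vector $\mathbf y\in\mathbb R^n$ with $y_{i_e}=-x_{i_e}$ for all $e\in E$ and $y_j=x_j$ for all other $j$ is an H-eigenvector of $\mathcal L$ corresponding to $\lambda(\mathcal L)$. (ii) If $\mathbf x\in\mathbb R^n$ is an H-eigenvector of $\mathcal L$ corresponding to $\lambda(\mathcal L)$, then the vector $\mathbf y\in\mathbb R^n_+$ with $y_i=|x_i|$ for all $i\in[n]$ is an H-eigenvector of $\mathcal Q$ corresponding to $\lambda(\mathcal Q)$.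
   Context: A $k$-uniform hypergraph $G=(V,E)$ has $V=[n]$ and a nonempty set $E$ of $k$-element subsets of $V$; $d_i$ is the number of edges containing $i$. A cored vertex is a vertex of degree one; $G$ is cored if every edge contains a cored vertex. With $\mathcal D$ the diagonal tensor with entries $d_i$ and $\mathcal A$ the order-$k$ tensor with entries $\frac1{(k-1)!}$ at index tuples forming an edge and $0$ otherwise, $\mathcal L=\mathcal D-\mathcal A$ and $\mathcal Q=\mathcal D+\mathcal A$; thus $(\mathcal L\mathbf x^{k-1})_i=d_ix_i^{k-1}-\sum_{e\ni i}\prod_{s\in e\setminus\{i\}}x_s$ and $(\mathcal Q\mathbf x^{k-1})_i=d_ix_i^{k-1}+\sum_{e\ni i}\prod_{s\in e\setminus\{i\}}x_s$. A real $\lambda$ is an H-eigenvalue of $\mathcal T$ with H-eigenvector $\mathbf x\neq0$ if $(\mathcal T\mathbf x^{k-1})_i=\lambda x_i^{k-1}$ for all $i$; $\lambda(\mathcal T)$ is the largest H-eigenvalue. $\mathbb R^n_+$ is the nonnegative orthant. *)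

From mathcomp Require Import all_boot all_order all_algebra.
From mathcomp Require Import reals.
Set Implicit Arguments. Unset Strict Implicit. Unset Printing Implicit Defensive.
Import Order.TTheory GRing.Theory Num.Theory.
Local Open Scope ring_scope.

Definition uniform_hypergraph (n k : nat) (E : {set {set 'I_n}}) : Prop :=
  E != set0 /\ forall e, e \in E -> #|e| = k.

Definition deg (n : nat) (E : {set {set 'I_n}}) (i : 'I_n) : nat :=
  #|[set e in E | i \in e]|.

Definition cored_vertex (n : nat) (E : {set {set 'I_n}}) (i : 'I_n) : Prop :=
  deg E i = 1%N.

Definition cored (n : nat) (E : {set {set 'I_n}}) : Prop :=
  forall e, e \in E -> exists2 i, i \in e & cored_vertex E i.

(* (L x^{k-1})_i and (Q x^{k-1})_i *)
Definition Lx (R : realType) (n k : nat) (E : {set {set 'I_n}})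
    (x : 'I_n -> R) (i : 'I_n) : R :=
  (deg E i)%:R * x i ^+ k.-1
  - \sum_(e in E | i \in e) \prod_(s in e :\ i) x s.

Definition Qx (R : realType) (n k : nat) (E : {set {set 'I_n}})
    (x : 'I_n -> R) (i : 'I_n) : R :=
  (deg E i)%:R * x i ^+ k.-1
  + \sum_(e in E | i \in e) \prod_(s in e :\ i) x s.

(* H-eigenpairs of a tensor given by its action T : (I_n -> R) -> I_n -> R *)
Definition H_eigvec (R : realType) (n k : nat)
    (T : ('I_n -> R) -> 'I_n -> R) (lam : R) (x : 'I_n -> R) : Prop :=
  (exists i, x i != 0) /\ forall i, T x i = lam * x i ^+ k.-1.

Definition H_eigval (R : realType) (n k : nat)
    (T : ('I_n -> R) -> 'I_n -> R) (lam : R) : Prop :=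
  exists x, H_eigvec k T lam x.

Definition largest_H_eigval (R : realType) (n k : nat)
    (T : ('I_n -> R) -> 'I_n -> R) (lam : R) : Prop :=
  H_eigval k T lam /\ forall mu, H_eigval k T mu -> mu <= lam.

Definition nonneg_vec (R : realType) (n : nat) (x : 'I_n -> R) : Prop :=
  forall i, 0 <= x i.

From mathcomp Require Import all_boot all_order all_algebra.
From mathcomp Require Import boolp classical_sets reals topology normedtype derive realfun.
From mathcomp Require Import ring lra.
Import Order.TTheory GRing.Theory Num.Theory.
Set Implicit Arguments. Unset Strict Implicit. Unset Printing Implicit Defensive.
Local Open Scope ring_scope.
Import numFieldNormedType.Exports.

(* Flipping the sign of the chosen cored vertex of every edge multiplies the edge product
   [\prod_(s in e :\ i) x s] by [-1] exactly when [i] itself is not flipped; as [k - 1] is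
   odd, this turns [Q x^(k-1)] into [L (flip x)^(k-1)] up to the sign of each coordinate.
   Hence Q and L have the same H-eigenvalues, with eigenvectors exchanged by flipping.
   For (ii), lambda(Q) is the maximum of the Rayleigh quotient [x^T (Q x^(k-1)) / sum_i x_i^k]:
   the maximum is attained by compactness and is an H-eigenvalue by Fermat's rule.  Taking
   absolute values of an eigenvector can only increase the numerator, so [|x|] is again a
   maximizer, hence an H-eigenvector for lambda(Q). *)

Lemma poly_deriv_eq0_at_max (R : realType) (p : {poly R}) (s0 : R) :
  (forall s, p.[s] <= p.[s0]) -> (p^`()).[s0] = 0.
Proof.
move=> pmax; have s0_in : s0 \in `](s0 - 1), (s0 + 1)[.
  by rewrite in_itv /= ltrBlDr !ltrDl ltr01.
have le_ends : s0 - 1 <= s0 + 1 by rewrite lerD2l (le_trans (lerN10 _)).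
have dp_max := derive1_at_max le_ends (fun t _ => @derivable_horner _ p t) s0_in
  (fun t _ => pmax t).
have dp := is_derive_poly p s0.
by rewrite -(@derive_val _ _ _ _ _ _ _ dp) (@derive_val _ _ _ _ _ _ _ dp_max).
Qed.

Lemma continuous_sumr (T : topologicalType) (R : realType) (I : Type) (r : seq I)
    (P : pred I) (F : I -> T -> R) :
  (forall i, continuous (F i)) -> continuous (fun x => \sum_(i <- r | P i) F i x).
Proof. by move=> F_cont; apply: continuous_big => [|i _]; [exact: add_continuous|]. Qed.

Lemma continuous_prodr (T : topologicalType) (R : realType) (I : Type) (r : seq I)
    (P : pred I) (F : I -> T -> R) :
  (forall i, continuous (F i)) -> continuous (fun x => \prod_(i <- r | P i) F i x).
Proof. by move=> F_cont; apply: continuous_big => [|i _]; [exact: mul_continuous|]. Qed.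

Lemma continuous_addr (T : topologicalType) (R : realType) (f g : T -> R) :
  continuous f -> continuous g -> continuous (fun x => f x + g x).
Proof. by move=> f_cont g_cont x; apply: cvgD; [exact: f_cont | exact: g_cont]. Qed.

Lemma continuous_mulr (T : topologicalType) (R : realType) (f g : T -> R) :
  continuous f -> continuous g -> continuous (fun x => f x * g x).
Proof. by move=> f_cont g_cont x; apply: cvgM; [exact: f_cont | exact: g_cont]. Qed.

Section Rayleigh.
Variables (R : realType) (n k : nat) (E : {set {set 'I_n}}).
Hypotheses (k_gt0 : (0 < k)%N) (k_even : ~~ odd k) (E_uniform : uniform_hypergraph k E).

Definition Qform (u : 'I_n -> R) : R := \sum_i u i * Qx k E u i.

Definition powsum (u : 'I_n -> R) : R := \sum_i u i ^+ k.

Lemma Qform_expand u :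
  Qform u = \sum_i (deg E i)%:R * u i ^+ k + k%:R * \sum_(e in E) \prod_(s in e) u s.
Proof.
rewrite /Qform /Qx.
under eq_bigr => i _ do rewrite mulrDr mulrCA -exprS (prednK k_gt0) mulr_sumr.
rewrite big_split /=; congr (_ + _).
under eq_bigr => i _ do rewrite big_mkcondr /=.
rewrite exchange_big mulr_sumr; apply: eq_bigr => e eE.
rewrite -(proj2 E_uniform e eE) -sum1_card natr_sum mulr_suml [RHS]big_mkcond /=.
by apply: eq_bigr => i _; case: ifP => ie; rewrite ?mul1r ?mul0r // (big_setD1 _ ie).
Qed.

Lemma Qform_eta_with w j : exists C, forall s,
  Qform [eta w with j |-> s] =
    (deg E j)%:R * s ^+ k + k%:R * (\sum_(e in E | j \in e) \prod_(t in e :\ j) w t) * s + C.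
Proof.
exists (\sum_(i | i != j) (deg E i)%:R * w i ^+ k
        + k%:R * \sum_(e in E | j \notin e) \prod_(t in e) w t) => s.
rewrite Qform_expand (bigD1 j) //= eqxx (bigID (fun e : {set 'I_n} => j \in e)) /=.
have -> : \sum_(i | i != j) (deg E i)%:R * [eta w with j |-> s] i ^+ k
    = \sum_(i | i != j) (deg E i)%:R * w i ^+ k.
  by apply: eq_bigr => i /negPf /= ->.
have -> : \sum_(e in E | j \notin e) \prod_(t in e) [eta w with j |-> s] t
    = \sum_(e in E | j \notin e) \prod_(t in e) w t.
  apply: eq_bigr => e /andP [_ je]; apply: eq_bigr => t te /=.
  by case: eqP => // tj; rewrite -tj te in je.
have -> : \sum_(e in E | j \in e) \prod_(t in e) [eta w with j |-> s] t
    = (\sum_(e in E | j \in e) \prod_(t in e :\ j) w t) * s.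
  rewrite mulr_suml; apply: eq_bigr => e /andP [_ je].
  rewrite (big_setD1 _ je) /= eqxx mulrC; congr (_ * _).
  by apply: eq_bigr => t /setD1P [/negPf /= ->].
ring.
Qed.

Lemma powsum_eta_with w j : exists C, forall s, powsum [eta w with j |-> s] = s ^+ k + C.
Proof.
exists (\sum_(i | i != j) w i ^+ k) => s; rewrite /powsum (bigD1 j) //= eqxx.
by congr (_ + _); apply: eq_bigr => i /negPf /= ->.
Qed.

(* Fermat's rule for [mu * powsum - Qform] along the [j]-th coordinate through [w]. *)
Lemma Qform_max_eigvec mu w :
  (forall u, Qform u <= mu * powsum u) -> Qform w = mu * powsum w ->
  forall j, Qx k E w j = mu * w j ^+ k.-1.
Proof.
move=> Qle Qeq j.
have [C1 HQ] := Qform_eta_with w j; have [C2 HN] := powsum_eta_with w j.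
set S := \sum_(e in E | j \in e) _ in HQ.
have w_eta : [eta w with j |-> w j] =1 w by move=> i /=; case: eqP => // ->.
pose p : {poly R} := ((deg E j)%:R - mu) *: 'X^k + (k%:R * S) *: 'X.
have p_max s : p.[s] <= p.[w j].
  have := Qle [eta w with j |-> s]; rewrite -(funext w_eta) HQ HN in Qeq; rewrite HQ HN.
  rewrite /p !hornerE; lra.
have := poly_deriv_eq0_at_max p_max.
rewrite /p derivD !derivZ derivXn derivX !hornerE hornerMn hornerXn -mulr_natl => crit.
have : k%:R * (Qx k E w j - mu * w j ^+ k.-1) = 0 by rewrite -[RHS]crit /Qx -/S; ring.
by move/eqP; rewrite mulf_eq0 pnatr_eq0 gtn_eqF // subr_eq0 => /eqP.
Qed.

Lemma Qx_scale (c : R) u i : Qx k E (fun s => c * u s) i = c ^+ k.-1 * Qx k E u i.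
Proof.
rewrite /Qx mulrDr exprMn mulrCA; congr (_ + _).
rewrite mulr_sumr; apply: eq_bigr => e /andP [eE ie].
rewrite big_split /= prodr_const; congr (_ ^+ _ * _).
by have := cardsD1 i e; rewrite ie (proj2 E_uniform e eE) add1n => ->.
Qed.

Lemma Qform_scale (c : R) u : Qform (fun s => c * u s) = c ^+ k * Qform u.
Proof.
rewrite /Qform mulr_sumr; apply: eq_bigr => i _.
by rewrite Qx_scale -(prednK k_gt0) exprS /=; ring.
Qed.

Lemma powsum_scale (c : R) u : powsum (fun s => c * u s) = c ^+ k * powsum u.
Proof. by rewrite /powsum mulr_sumr; apply: eq_bigr => i _; rewrite exprMn. Qed.

Lemma powsum_ge0 u : 0 <= powsum u.
Proof. by apply: sumr_ge0 => i _; rewrite exprn_even_ge0. Qed.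

Lemma ler_powsum u j : u j ^+ k <= powsum u.
Proof.
rewrite /powsum (bigD1 j) //= lerDl.
by apply: sumr_ge0 => i _; rewrite exprn_even_ge0.
Qed.

Lemma norm_Qx_le (u : 'I_n -> R) i : `|Qx k E u i| <= Qx k E (fun j => `|u j|) i.
Proof.
rewrite /Qx; apply: le_trans (ler_normD _ _) _; apply: lerD.
  by rewrite normrM normr_nat normrX.
apply: le_trans (ler_norm_sum _ _ _) _; apply: ler_sum => e _.
by rewrite normr_prod.
Qed.

Lemma rescale_into_box u : (exists j, u j != 0) ->
  exists2 c : R, c != 0 & (forall i, `|c * u i| <= 1) /\ 1 <= powsum (fun i => c * u i).
Proof.
case=> j uj; have [i1 _ u_le] := @arg_maxP _ _ _ j xpredT (fun i => `|u i|) isT.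
have ui1_gt0 : 0 < `|u i1| by rewrite (lt_le_trans _ (u_le j isT)) ?normr_gt0.
exists (`|u i1|^-1); first by rewrite invr_neq0 ?gt_eqF.
split=> [i | ].
  by rewrite normrM normfV normr_id mulrC ler_pdivrMr // mul1r; exact: u_le.
apply: le_trans _ (ler_powsum _ i1); rewrite -[_ ^+ k]ger0_norm ?exprn_even_ge0 //.
by rewrite normrX normrM normfV normr_id mulVf ?gt_eqF // expr1n.
Qed.

Local Open Scope classical_set_scope.

Lemma Qform_ratio_max : (0 < n)%N ->
  exists2 c, 1 <= powsum c & forall u, Qform u <= Qform c / powsum c * powsum u.
Proof.
move=> n_gt0; pose vec (v : 'rV[R]_n) i := v ord0 i.
have coord_cont i m : continuous (fun v : 'rV[R]_n => vec v i ^+ m).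
  move=> v; apply: (@continuous_comp _ _ _ (vec^~ i) (fun x : R => x ^+ m)).
    exact: coord_continuous.
  exact: exprn_continuous.
have powsum_cont : continuous (fun v => powsum (vec v)).
  by apply: continuous_sumr => i; exact: coord_cont.
have Qform_cont : continuous (fun v => Qform (vec v)).
  apply: continuous_sumr => i; apply: continuous_mulr; first exact: coord_continuous.
  apply: continuous_addr.
    by apply: continuous_mulr; [exact: cst_continuous | exact: coord_cont].
  apply: continuous_sumr => e; apply: continuous_prodr => s; exact: coord_continuous.
(* The quotient is scale invariant, and every nonzero vector rescales into [A]. *)
pose A := [set v : 'rV[R]_n | forall i, `[-1, 1] (v ord0 i)] `&`
          [set v | 1 <= powsum (vec v)].
have A_compact : compact A.
  apply: compact_closedI; first exact: (rV_compact (fun _ => @segment_compact R (-1) 1)).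
  apply: (preimage_closed (f := fun v => powsum (vec v)) (D := [set x | 1 <= x])).
    by move=> v _; exact: powsum_cont.
  exact: closed_ge.
have A_ne0 : A !=set0.
  exists (const_mx 1); split=> [i|] /=.
    by rewrite mxE in_itv /= lexx andbT (le_trans (lerN10 _)).
  by apply: le_trans _ (ler_powsum _ (Ordinal n_gt0)); rewrite /vec mxE expr1n.
have ratio_cont : {within A, continuous (fun v => Qform (vec v) / powsum (vec v))}.
  apply: continuous_in_subspaceT => v /set_mem [_ Av].
  apply: (cvgM (Qform_cont v)); apply: (cvgV _ (powsum_cont v)).
  by rewrite gt_eqF // (lt_le_trans ltr01).
have [c /set_mem [_ Ac] c_max] := EVT_max_rV A_ne0 A_compact ratio_cont.
exists (vec c) => // u.
have [/rescale_into_box [a a_neq0 [ua_box ua_ge1]] | u0] := pselect (exists j, u j != 0).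
  have a_row : vec (\row_i (a * u i)) = fun i => a * u i.
    by apply/funext => i; rewrite /vec mxE.
  have row_in_A : A (\row_i (a * u i)).
    by split; rewrite /= ?a_row // => i; rewrite mxE in_itv /= -ler_norml.
  have := c_max _ (mem_set row_in_A); rewrite a_row ler_pdivrMr ?(lt_le_trans ltr01) //.
  by rewrite Qform_scale powsum_scale mulrCA ler_pM2l // exprn_even_gt0 // a_neq0 orbT.
have -> : u = fun i => 0 * u i.
  by apply/funext => i; rewrite mul0r; apply/eqP/negPn/negP => ui; apply: u0; exists i.
by rewrite Qform_scale powsum_scale expr0n gtn_eqF // !mul0r mulr0.
Qed.

Local Close Scope classical_set_scope.

Lemma Qform_le_eigval : (0 < n)%N ->
  exists mu, H_eigval k (Qx k E) mu /\ forall u, Qform u <= mu * powsum u.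
Proof.
move=> n_gt0; have [c c_ge1 c_max] := Qform_ratio_max n_gt0.
have powsum_c_neq0 : powsum c != 0 by rewrite gt_eqF // (lt_le_trans ltr01).
exists (Qform c / powsum c); split=> //; exists c; split.
  case: (pselect (exists i, c i != 0)) => // c0.
  move: powsum_c_neq0; rewrite /powsum big1 ?eqxx // => i _.
  have /negP/negPn/eqP -> : ~ (c i != 0) by move=> ci; apply: c0; exists i.
  by rewrite expr0n gtn_eqF.
by apply: Qform_max_eigvec c_max _; rewrite mulfVK.
Qed.

Lemma H_eigvec_norm_largest (lam : R) z :
  largest_H_eigval k (Qx k E) lam -> H_eigvec k (Qx k E) lam z ->
  H_eigvec k (Qx k E) lam (fun j => `|z j|).
Proof.
move=> [_ lam_max] [[i0 zi0] Hz]; set y := fun j => `|z j|.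
have [mu [mu_eig Qle_mu]] := Qform_le_eigval (leq_ltn_trans (leq0n _) (ltn_ord i0)).
have Qle u : Qform u <= lam * powsum u.
  exact: le_trans (Qle_mu u) (ler_wpM2r (powsum_ge0 u) (lam_max _ mu_eig)).
have lam_le : lam * powsum y <= Qform y.
  rewrite /powsum /Qform mulr_sumr; apply: ler_sum => i _.
  have : lam * y i ^+ k <= `|z i * Qx k E z i|.
    rewrite Hz mulrCA -exprS (prednK k_gt0) normrM normrX.
    by rewrite ler_wpM2r ?ler_norm // exprn_ge0 // normr_ge0.
  move/le_trans; apply; rewrite normrM ler_wpM2l //; exact: norm_Qx_le.
have Qeq : Qform y = lam * powsum y by apply/le_anti; rewrite lam_le Qle.
split; first by exists i0; rewrite normr_eq0.
exact: Qform_max_eigvec Qle Qeq.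
Qed.

End Rayleigh.

Section Flip.
Variables (R : realType) (n k : nat) (E : {set {set 'I_n}}) (ie : {set 'I_n} -> 'I_n).
Hypothesis ie_cored : forall e, e \in E -> ie e \in e /\ cored_vertex E (ie e).
Hypotheses (k_gt0 : (0 < k)%N) (k_even : ~~ odd k).

Definition flipped (j : 'I_n) : bool := [exists e in E, ie e == j].

Definition flip (z : 'I_n -> R) (j : 'I_n) : R := if flipped j then - z j else z j.

Lemma flipE z j : flip z j = (-1) ^+ flipped j * z j.
Proof. by rewrite /flip; case: flipped; rewrite ?mulN1r ?mul1r. Qed.

Lemma flipK : involutive flip.
Proof. by move=> z; apply/funext => j; rewrite !flipE mulrA -expr2 sqrr_sign mul1r. Qed.

(* A cored vertex lies in a single edge, so it is chosen by no other edge. *)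
Lemma flippedE e s : e \in E -> s \in e -> flipped s = (s == ie e).
Proof.
move=> eE se; apply/existsP/eqP => [[f /andP [fE /eqP fs]] | ->]; last first.
  by exists e; rewrite eE eqxx.
have [sf /eqP/cards1P [a Ha]] := ie_cored fE.
have : e \in [set a] by rewrite -Ha fs inE eE se.
have : f \in [set a] by rewrite -Ha inE fE sf.
by rewrite !inE => /eqP <- /eqP ->.
Qed.

Lemma prod_flip z e i : e \in E -> i \in e ->
  \prod_(s in e :\ i) flip z s = - (-1) ^+ flipped i * \prod_(s in e :\ i) z s.
Proof.
move=> eE ie_; have [iee _] := ie_cored eE.
have flip_in s : s \in e -> flip z s = if s == ie e then - z s else z s.
  by move=> se; rewrite /flip (flippedE eE se).
rewrite (flippedE eE ie_); have [-> | nie] := eqVneq i (ie e).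
  rewrite expr1 opprK mul1r; apply: eq_bigr => s /setD1P [/negPf nse se].
  by rewrite flip_in // nse.
have iei : ie e \in e :\ i by rewrite !inE eq_sym nie iee.
rewrite expr0 mulN1r (bigD1 _ iei) [in RHS](bigD1 _ iei) /= -mulNr.
congr (_ * _); first by rewrite flip_in ?eqxx.
apply: eq_bigr => s /andP [/setD1P [_ se] /negPf nse].
by rewrite flip_in // nse.
Qed.

Lemma flip_pow z j : flip z j ^+ k.-1 = (-1) ^+ flipped j * z j ^+ k.-1.
Proof.
have k1_odd : odd k.-1 by move: k_even; rewrite -(prednK k_gt0) /= negbK.
by rewrite flipE exprMn exprAC -(signr_odd _ k.-1) k1_odd expr1.
Qed.

Lemma Lx_flip z i : Lx k E (flip z) i = (-1) ^+ flipped i * Qx k E z i.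
Proof.
rewrite /Lx /Qx flip_pow mulrDr mulrCA; congr (_ + _).
rewrite mulr_sumr -sumrN; apply: eq_bigr => e /andP [eE iE].
by rewrite prod_flip // mulNr opprK.
Qed.

Lemma flip_neq0 z : (exists i, z i != 0) -> exists i, flip z i != 0.
Proof. by case=> i zi; exists i; rewrite flipE mulf_neq0 ?signr_eq0. Qed.

Lemma H_eigvec_flipQL lam z :
  H_eigvec k (Qx k E) lam z -> H_eigvec k (Lx k E) lam (flip z).
Proof.
case=> nz Hz; split=> [|j]; first exact: flip_neq0.
by rewrite Lx_flip Hz flip_pow mulrCA.
Qed.

Lemma H_eigvec_flipLQ lam z :
  H_eigvec k (Lx k E) lam z -> H_eigvec k (Qx k E) lam (flip z).
Proof.
case=> nz Hz; split=> [|j]; first exact: flip_neq0.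
have := Lx_flip (flip z) j; rewrite flipK Hz flip_pow mulrCA => ->.
by rewrite mulrA -expr2 sqrr_sign mul1r.
Qed.

Lemma H_eigval_flip (lam : R) : H_eigval k (Qx k E) lam <-> H_eigval k (Lx k E) lam.
Proof.
split=> -[z hz]; exists (flip z); [exact: H_eigvec_flipQL | exact: H_eigvec_flipLQ].
Qed.

Lemma largest_H_eigval_flip (lam : R) :
  largest_H_eigval k (Qx k E) lam <-> largest_H_eigval k (Lx k E) lam.
Proof.
by split=> -[hl hmax]; split=> [|mu /H_eigval_flip]; try exact/H_eigval_flip;
  exact: hmax.
Qed.

End Flip.

Theorem proposition3p3 (R : realType) (n k : nat) (E : {set {set 'I_n}})
    (ie : {set 'I_n} -> 'I_n) :
  (4 <= k)%N -> ~~ odd k ->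
  uniform_hypergraph k E -> cored E ->
  (forall e, e \in E -> ie e \in e /\ cored_vertex E (ie e)) ->
  (* (i) *)
  (forall (lamQ : R) (x : 'I_n -> R),
     largest_H_eigval k (Qx k E) lamQ -> nonneg_vec x ->
     H_eigvec k (Qx k E) lamQ x ->
     let y := fun j => if [exists e in E, ie e == j] then - x j else x j in
     exists lamL : R, largest_H_eigval k (Lx k E) lamL /\
                      H_eigvec k (Lx k E) lamL y) /\
  (* (ii) *)
  (forall (lamL : R) (x : 'I_n -> R),
     largest_H_eigval k (Lx k E) lamL ->
     H_eigvec k (Lx k E) lamL x ->
     let y := fun j => `|x j| in
     nonneg_vec y /\
     exists lamQ : R, largest_H_eigval k (Qx k E) lamQ /\
                      H_eigvec k (Qx k E) lamQ y).
Proof.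
move=> k_ge4 k_even E_uniform _ ie_cored.
have k_gt0 : (0 < k)%N by apply: leq_trans k_ge4.
split=> [lam x lam_largest _ x_eig y | lam x lam_largest x_eig y].
  exists lam; split; first exact/(largest_H_eigval_flip ie_cored k_gt0 k_even).
  exact: H_eigvec_flipQL x_eig.
split=> [i|]; first exact: normr_ge0.
have lamQ_largest : largest_H_eigval k (Qx k E) lam.
  exact/(largest_H_eigval_flip ie_cored k_gt0 k_even).
exists lam; split=> //.
have -> : y = fun j => `|flip E ie x j|.
  by apply/funext => j; rewrite /y /flip; case: ifP; rewrite ?normrN.
have flip_x_eig := H_eigvec_flipLQ ie_cored k_gt0 k_even x_eig.
exact (H_eigvec_norm_largest k_gt0 k_even E_uniform lamQ_largest flip_x_eig).
Qed.
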